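(* For every Stackelberg game $(G,L,F)$, $\mathcal{X}^S\subseteq\mathcal{X}^{S\text{-}NF}$ and $\mathcal{X}^{PS}\subseteq\mathcal{X}^{PS\text{-}NF}$, where $\mathcal{X}^S,\mathcal{X}^{PS}$ refer to $(G,L,F)$ and $\mathcal{X}^{S\text{-}NF},\mathcal{X}^{PS\text{-}NF}$ refer to $(G,N,\emptyset)$.
   Context: A finite game is $G=(N,\{S_p\}_{p\in N},\{u_p\}_{p\in N})$ with players $N=\{1,\dots,n\}$, finite nonempty strategy sets $S_p$, and utilities $u_p:S\to\mathbb{R}$ on $S=\prod_{p\in N}S_p$; write $s=(s_p,s_{-p})$ with $s_{-p}\in S_{-p}=\prod_{q\neq p}S_q$. $\mathcal{X}=\Delta(S)$ is the set of probability distributions on $S$ and $u_p(x)=\sum_{s\in S}x(s)u_p(s)$ for $x\in\mathcal{X}$. For $P\subseteq N$, $\mathcal{X}^{CE}_P$ is the set of $x\in\mathcal{X}$ such that for every $p\in P$ and all $s_p\neq s_p'\in S_p$: $\sum_{s_{-p}\in S_{-p}} x(s_p,s_{-p})\,(u_p(s_p,s_{-p})-u_p(s_p',s_{-p}))\ge 0$; $\mathcal{X}^{CE}=\mathcal{X}^{CE}_N$ is the set of correlated equilibria of $G$. A Stackelberg game (SG) is a triple $(G,L,F)$ with $L\cup F=N$ and $L\cap F=\emptyset$ (leaders and followers). For $P\subseteq N$, $\Pi_P$ is the set of ordered subsets of $P$ (finite sequences of pairwise distinct elements of $P$, including the empty sequence $\varnothing$); for $\pi\in\Pi_P$ and $p\in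 P$ not occurring in $\pi$, $\pi p$ is $\pi$ with $p$ appended; when used as a set, $\pi$ means its set of entries. $\mathbf{X}=\prod_{\pi\in\Pi_L}\mathcal{X}^{CE}_{\pi\cup F}$, with elements $\mathbf{x}=[x_\pi]_{\pi\in\Pi_L}$. For $\mathbf{x}\in\mathbf{X}$ and $\pi\in\Pi_L$, $x_\pi$ is stable if $u_p(x_\pi)\ge u_p(x_{\pi p})$ for all $p\in L\setminus\pi$; $\mathbf{x}$ is stable if $x_\varnothing$ is stable, and perfectly stable if $x_\pi$ is stable for every $\pi\in\Pi_L$; $\mathbf{X}^{S}$ and $\mathbf{X}^{PS}$ denote the sets of stable and perfectly stable elements of $\mathbf{X}$. $\mathcal{X}^S=\{x_\varnothing:\mathbf{x}\in\mathbf{X}^S\}$ and $\mathcal{X}^{PS}=\{x_\varnothing:\mathbf{x}\in\mathbf{X}^{PS}\}$ (for the given SG). $\mathcal{X}^{S\text{-}NF}$ and $\mathcal{X}^{PS\text{-}NF}$ are the sets $\mathcal{X}^S$ and $\mathcal{X}^{PS}$ computed for the SG $(G,N,\emptyset)$ in which every player is a leader. *)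

From HB Require Import structures.
From mathcomp Require Import all_boot all_order all_algebra.
Set Implicit Arguments. Unset Strict Implicit. Unset Printing Implicit Defensive.
Import Order.TTheory GRing.Theory Num.Theory.
Local Open Scope ring_scope.

Section StackelbergDefs.
Variables (R : realFieldType) (n : nat) (T : 'I_n -> finType).

Definition profile := {dffun forall p : 'I_n, T p}.

Definition dev (s : profile) (p : 'I_n) (t : T p) : profile :=
  [ffun q => dfwith s t q].
Arguments dev : clear implicits.

(* elements of Delta(S) are represented as functions S -> R *)
Definition is_dist (x : {ffun profile -> R}) : Prop :=
  (forall s, 0 <= x s) /\ \sum_s x s = 1.

Variable u : 'I_n -> profile -> R.

Definition EU (p : 'I_n) (x : {ffun profile -> R}) : R := \sum_s x s * u p s.

Definition CE (P : {set 'I_n}) (x : {ffun profile -> R}) : Prop :=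
  is_dist x /\
  forall p, p \in P -> forall a b : T p, a != b ->
    0 <= \sum_(s : profile | s p == a) x s * (u p s - u p (dev s p b)).

(* ordered subsets of P: duplicate-free sequences of elements of P *)
Definition ordsub (P : {set 'I_n}) (pi : seq 'I_n) : Prop :=
  uniq pi /\ {subset pi <= P}.

(* bold X for the SG (G,L,F): families indexed by ordered subsets of L;
   values at sequences outside Pi_L are irrelevant *)
Definition inX (L F : {set 'I_n}) (x : seq 'I_n -> {ffun profile -> R}) : Prop :=
  forall pi, ordsub L pi -> CE ([set q | q \in pi] :|: F) (x pi).

Definition stable_at (L : {set 'I_n}) (x : seq 'I_n -> {ffun profile -> R})
  (pi : seq 'I_n) : Prop :=
  forall p, p \in L -> p \notin pi -> EU p (x (rcons pi p)) <= EU p (x pi).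

Definition XS (L F : {set 'I_n}) (y : {ffun profile -> R}) : Prop :=
  exists x, [/\ inX L F x, stable_at L x [::] & x [::] = y].

Definition XPS (L F : {set 'I_n}) (y : {ffun profile -> R}) : Prop :=
  exists x, [/\ inX L F x, (forall pi, ordsub L pi -> stable_at L x pi)
                & x [::] = y].

End StackelbergDefs.

From HB Require Import structures.
From mathcomp Require Import all_boot all_order all_algebra.
Import Order.TTheory GRing.Theory Num.Theory.
Set Implicit Arguments. Unset Strict Implicit. Unset Printing Implicit Defensive.
Local Open Scope ring_scope.

(* Given a family x = [x_pi]_(pi in Pi_L) for the game (G, L, F), define the
   family for (G, N, set0) by forgetting followers in the order of
   commitment:  x'_pi := x_(pi restricted to L).
   - Each x'_pi lies in X^CE_pi: the restriction pi|_L is an ordered subset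
     of L, so x_(pi|_L) is a correlated equilibrium for the players of
     pi|_L together with all followers F, and since L and F cover N this
     set contains every player of pi; CE constraints are antitone in the
     set of players.
   - Stability transfers pointwise: for a leader p, (rcons pi p)|_L is
     rcons (pi|_L) p, so the inequality is the one of x at pi|_L; for a
     follower p, appending p does not change the restriction and the
     inequality is trivial.
   Applied at the empty sequence this gives X^S, applied at all ordered
   subsets it gives X^PS. *)

Section NormalFormEmbedding.
Variables (R : realFieldType) (n : nat) (T : 'I_n -> finType).
Variable u : 'I_n -> profile T -> R.

Lemma CE_sub (P Q : {set 'I_n}) (x : {ffun profile T -> R}) :
  Q \subset P -> CE u P x -> CE u Q x.
Proof. by move=> /subsetP sQP [xdist xCE]; split=> // p /sQP; exact: xCE. Qed.

Lemma ordsub_filter (L : {set 'I_n}) (pi : seq 'I_n) :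
  uniq pi -> ordsub L [seq q <- pi | q \in L].
Proof.
by move=> upi; split; [exact: filter_uniq | move=> q; rewrite mem_filter => /andP[]].
Qed.

Variables (L F : {set 'I_n}).
Hypothesis LF_cover : L :|: F = setT.

Definition forget_followers (x : seq 'I_n -> {ffun profile T -> R}) :
  seq 'I_n -> {ffun profile T -> R} :=
  fun pi => x [seq q <- pi | q \in L].

Lemma players_covered (pi : seq 'I_n) :
  [set q | q \in pi] \subset [set q | q \in [seq q <- pi | q \in L]] :|: F.
Proof.
apply/subsetP => q; rewrite !inE mem_filter => qpi.
have : q \in L :|: F by rewrite LF_cover inE.
by rewrite inE qpi andbT.
Qed.

Lemma inX_forget_followers (x : seq 'I_n -> {ffun profile T -> R}) :
  inX u L F x -> inX u setT set0 (forget_followers x).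
Proof.
move=> xX pi [upi _]; rewrite setU0.
exact: CE_sub (players_covered pi) (xX _ (ordsub_filter L upi)).
Qed.

Lemma stable_forget_followers (x : seq 'I_n -> {ffun profile T -> R})
    (pi : seq 'I_n) :
  stable_at u L x [seq q <- pi | q \in L] ->
  stable_at u setT (forget_followers x) pi.
Proof.
move=> xstable p _ p_notin_pi; rewrite /forget_followers filter_rcons.
case: ifP => pL; last exact: lexx.
by apply: xstable; rewrite // mem_filter negb_and p_notin_pi orbT.
Qed.

End NormalFormEmbedding.

Theorem mainTheorem14 (R : realFieldType) (n : nat) (T : 'I_n -> finType)
  (hT : forall p, (0 < #|T p|)%N) (u : 'I_n -> profile T -> R)
  (L F : {set 'I_n}) (hLF : L :|: F = setT) (hLF' : L :&: F = set0) :
  (forall y, XS u L F y -> XS u setT set0 y) /\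
  (forall y, XPS u L F y -> XPS u setT set0 y).
Proof.
split=> y [x [xX xstable <-]]; exists (forget_followers L x).
- split; [exact: (inX_forget_followers hLF xX) | | by []].
  exact: (stable_forget_followers (pi := [::])).
- split; [exact: (inX_forget_followers hLF xX) | | by []].
  move=> pi [upi _]; apply: stable_forget_followers.
  exact: xstable (ordsub_filter L upi).
Qed.
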